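(* Let $I$ be an ideal of a ring $R$ with $Nil(R)\subseteq I$. The following are equivalent: (1) idempotents can be lifted uniquely weakly modulo $I$; (2) idempotents can be lifted weakly modulo $I$, $R$ is abelian, and $I$ is idempotent free; (3) idempotents can be lifted centrally weakly modulo $I$, and $I$ is idempotent free.
   Context: All rings are associative with identity; $Idem(R)$ is the set of idempotents and $Nil(R)$ the set of nilpotent elements of $R$. Idempotents can be lifted weakly modulo $I$ if for every $x\in R$ with $x^2-x\in I$ there is $e\in Idem(R)$ with $x-e\in I$ or $x+e\in I$; lifted uniquely weakly modulo $I$ if for every such $x$ there is a unique $e\in Idem(R)$ with $x-e\in I$ or $x+e\in I$; lifted centrally weakly modulo $I$ if for every such $x$ there is a central $e\in Idem(R)$ with $x-e\in I$ or $x+e\in I$. An ideal is idempotent free if the only idempotent it contains is $0$. $R$ is abelian if all its idempotents are central. *)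

From HB Require Import structures.
From mathcomp Require Import all_boot all_algebra.
Set Implicit Arguments. Unset Strict Implicit. Unset Printing Implicit Defensive.
Import GRing.Theory.
Local Open Scope ring_scope.

(* Rings: associative with identity (pzRingType; the zero ring is allowed).
   Subsets of R are Prop-valued predicates. *)

Definition is_ideal (R : pzRingType) (I : R -> Prop) : Prop :=
  [/\ I 0,
      (forall x y, I x -> I y -> I (x - y)),
      (forall r x, I x -> I (r * x)) &
      (forall r x, I x -> I (x * r))].

Definition idem (R : pzRingType) (e : R) : Prop := e * e = e.

Definition nilp (R : pzRingType) (x : R) : Prop := exists n : nat, x ^+ n = 0.

Definition central (R : pzRingType) (e : R) : Prop := forall x : R, e * x = x * e.

Definition nil_sub (R : pzRingType) (I : R -> Prop) : Prop :=
  forall x : R, nilp x -> I x.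

Definition abelian_ring (R : pzRingType) : Prop :=
  forall e : R, idem e -> central e.

Definition idem_free (R : pzRingType) (I : R -> Prop) : Prop :=
  forall e : R, idem e -> I e -> e = 0.

Definition weak_lift_rel (R : pzRingType) (I : R -> Prop) (x e : R) : Prop :=
  I (x - e) \/ I (x + e).

Definition lift_weakly (R : pzRingType) (I : R -> Prop) : Prop :=
  forall x : R, I (x * x - x) ->
    exists e : R, idem e /\ weak_lift_rel I x e.

Definition lift_uniquely_weakly (R : pzRingType) (I : R -> Prop) : Prop :=
  forall x : R, I (x * x - x) ->
    exists! e : R, idem e /\ weak_lift_rel I x e.

Definition lift_centrally_weakly (R : pzRingType) (I : R -> Prop) : Prop :=
  forall x : R, I (x * x - x) ->
    exists e : R, [/\ idem e, central e & weak_lift_rel I x e].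

(* Weak lifts are unique up to the relation e = ±f mod I, and two idempotents
   e, f that commute and satisfy e = ±f mod I differ by the idempotents
   (1 - f) e and (1 - e) f of I; hence in an idempotent-free ideal a weak lift
   that is central is the only one.  Conversely, if weak lifts are unique then
   for an idempotent e and a square-zero a with e a + a e = a, both e and e + a
   lift e (a is nilpotent, so lies in I), forcing a = 0; applied to the Peirce
   corners a = e r (1 - e) and a = (1 - e) r e this makes e central, and
   applied to x = 0 it shows I is idempotent free. *)
From mathcomp Require Import all_boot all_algebra.
Import GRing.Theory.
Local Open Scope ring_scope.
Set Implicit Arguments.

Section IdempotentAlgebra.
Variable R : pzRingType.

Lemma idem_compl (e : R) : idem e -> idem (1 - e).
Proof. by move=> he; rewrite /idem mulrBl mul1r mulrBr mulr1 he subrr subr0. Qed.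

Lemma idem_mulC (e f : R) : idem e -> idem f -> e * f = f * e -> idem (e * f).
Proof.
by move=> he hf cef; rewrite /idem mulrA -(mulrA e) -cef mulrA he -mulrA hf.
Qed.

Lemma mulr_idem_compl (e : R) : idem e -> e * (1 - e) = 0.
Proof. by move=> he; rewrite mulrBr mulr1 he subrr. Qed.

Lemma mulr_compl_idem (e : R) : idem e -> (1 - e) * e = 0.
Proof. by move=> he; rewrite mulrBl mul1r he subrr. Qed.

Lemma idem_add_sqr0 (e a : R) :
  idem e -> a * a = 0 -> e * a + a * e = a -> idem (e + a).
Proof.
by move=> he aa ea; rewrite /idem mulrDl !mulrDr he aa addr0 -addrA ea.
Qed.

Lemma central_idem_Peirce (e r : R) :
  idem e -> e * r * (1 - e) = 0 -> (1 - e) * r * e = 0 -> e * r = r * e.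
Proof.
move=> he /eqP; rewrite mulrBr mulr1 subr_eq0 => /eqP ->.
by move/eqP; rewrite !mulrBl mul1r subr_eq0 => /eqP.
Qed.

End IdempotentAlgebra.

Section WeakLifts.
Variables (R : pzRingType) (I : R -> Prop).
Hypothesis idealI : is_ideal I.

Lemma ideal0 : I 0.
Proof. by case: idealI. Qed.

Lemma idealB (x y : R) : I x -> I y -> I (x - y).
Proof. by case: idealI => _ + _ _; apply. Qed.

Lemma idealN (x : R) : I x -> I (- x).
Proof. by move=> Ix; rewrite -sub0r; apply: idealB ideal0 Ix. Qed.

Lemma idealMl (r x : R) : I x -> I (r * x).
Proof. by case: idealI => _ _ + _; apply. Qed.

Lemma ideal_idem_sqr_sub (e : R) : idem e -> I (e * e - e).
Proof. by move=> he; rewrite he subrr; apply: ideal0. Qed.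

Lemma weak_lift_relxx (x : R) : weak_lift_rel I x x.
Proof. by left; rewrite subrr; apply: ideal0. Qed.

Lemma weak_lift_rel_sym (x y : R) : weak_lift_rel I x y -> weak_lift_rel I y x.
Proof.
case=> Ixy; [left | right]; last by rewrite addrC.
by rewrite -opprB; apply: idealN.
Qed.

Lemma weak_lift_rel_trans (x e f : R) :
  weak_lift_rel I x e -> weak_lift_rel I x f -> weak_lift_rel I e f.
Proof.
have subB (a b c : R) : a - c - (a - b) = b - c by rewrite opprB addrC addrA subrK.
have addB (a b c : R) : a + c - (a - b) = b + c by rewrite opprB addrC addrA subrK.
have addK (a b c : R) : a + b - (a + c) = b - c by rewrite opprD addrACA subrr add0r.
case=> Ie; case=> If.
- by left; rewrite -(subB x); apply: idealB.
- by right; rewrite -(addB x); apply: idealB.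
- by right; rewrite addrC -(addB x); apply: idealB.
- by left; rewrite -(addK x); apply: idealB.
Qed.

Lemma weak_lift_rel_mul_compl (e f : R) :
  idem f -> weak_lift_rel I e f -> I ((1 - f) * e).
Proof.
move=> hf rel; have f0 := mulr_compl_idem hf.
by case: rel => /(idealMl (1 - f)); rewrite (mulrBr, mulrDr) f0 (subr0, addr0).
Qed.

Lemma idem_free_central_weak_lift_eq (e f : R) :
  idem_free I -> idem e -> idem f -> central f -> weak_lift_rel I e f -> e = f.
Proof.
move=> free he hf cf rel.
have efC : e * f = f * e by rewrite cf.
have /eqP : (1 - f) * e = 0.
  apply: free; first by apply: idem_mulC (idem_compl hf) he _; rewrite mulrBl mulrBr mul1r mulr1 efC.
  exact: weak_lift_rel_mul_compl.
have /eqP : (1 - e) * f = 0.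
  apply: free; first by apply: idem_mulC (idem_compl he) hf _; rewrite mulrBl mulrBr mul1r mulr1 efC.
  exact/weak_lift_rel_mul_compl/weak_lift_rel_sym.
rewrite !mulrBl !mul1r !subr_eq0 => /eqP {2}-> /eqP {1}->.
by rewrite efC.
Qed.

Lemma lift_uniquely_weakly_eq (x e f : R) : lift_uniquely_weakly I -> I (x * x - x) ->
  idem e -> idem f -> weak_lift_rel I x e -> weak_lift_rel I x f -> e = f.
Proof.
move=> uniq Ix he hf xe xf; have [u [_ eq_u]] := uniq x Ix.
by rewrite -(eq_u e) // -(eq_u f).
Qed.

Lemma lift_uniquely_weakly_sqr0 (e a : R) : nil_sub I -> lift_uniquely_weakly I ->
  idem e -> a * a = 0 -> e * a + a * e = a -> a = 0.
Proof.
move=> nilI uniq he aa ea.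
suff : e + a = e + 0 by move/addrI.
rewrite addr0; apply: (lift_uniquely_weakly_eq uniq (ideal_idem_sqr_sub he)) => //.
- exact: idem_add_sqr0.
- left; rewrite opprD addrA subrr add0r; apply/idealN/nilI.
  by exists 2%N; rewrite expr2.
- exact: weak_lift_relxx.
Qed.

Lemma lift_uniquely_weakly_abelian :
  nil_sub I -> lift_uniquely_weakly I -> abelian_ring R.
Proof.
move=> nilI uniq e he r; have zero := lift_uniquely_weakly_sqr0 nilI uniq he.
have ee : e * e = e := he.
have e0 := mulr_idem_compl he; have e0' := mulr_compl_idem he.
apply: central_idem_Peirce => //; apply: zero.
- by rewrite -!mulrA (mulrA (1 - e)) e0' mul0r !mulr0.
- by rewrite -!mulrA e0' !mulr0 addr0 !mulrA ee.
- by rewrite -!mulrA (mulrA e) e0 mul0r !mulr0.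
- by rewrite !mulrA e0 !mul0r add0r -(mulrA _ e e) ee.
Qed.

Lemma lift_uniquely_weakly_idem_free : lift_uniquely_weakly I -> idem_free I.
Proof.
move=> uniq e he Ie; symmetry.
have idem0 : idem (0 : R) by rewrite /idem mulr0.
apply: (lift_uniquely_weakly_eq uniq (ideal_idem_sqr_sub idem0)) => //.
- exact: weak_lift_relxx.
- by left; rewrite sub0r; apply: idealN.
Qed.

Lemma lift_weakly_uniquely : lift_weakly I -> abelian_ring R -> idem_free I ->
  lift_uniquely_weakly I.
Proof.
move=> lift ab free x Ix; have [e [he xe]] := lift x Ix.
exists e; split=> // f [hf xf].
exact: idem_free_central_weak_lift_eq (ab f hf) (weak_lift_rel_trans xe xf).
Qed.

Lemma lift_centrally_weakly_abelian :
  lift_centrally_weakly I -> idem_free I -> abelian_ring R.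
Proof.
move=> lift free e he; have [f [hf cf ef]] := lift e (ideal_idem_sqr_sub he).
by rewrite (idem_free_central_weak_lift_eq free he hf cf ef).
Qed.

End WeakLifts.

Theorem mainTheorem6 (R : pzRingType) (I : R -> Prop) :
  is_ideal I -> nil_sub I ->
  (lift_uniquely_weakly I <->
     (lift_weakly I /\ abelian_ring R /\ idem_free I)) /\
  ((lift_weakly I /\ abelian_ring R /\ idem_free I) <->
     (lift_centrally_weakly I /\ idem_free I)).
Proof.
move=> idealI nilI; split; split.
- move=> uniq; split; last split.
  + by move=> x Ix; have [e [lift_e _]] := uniq x Ix; exists e.
  + exact: lift_uniquely_weakly_abelian idealI nilI uniq.
  + exact: lift_uniquely_weakly_idem_free idealI uniq.
- by case=> lift [ab free]; apply: lift_weakly_uniquely idealI lift ab free.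
- case=> lift [ab free]; split=> // x Ix.
  by have [e [he xe]] := lift x Ix; exists e; split=> //; apply: ab.
- case=> lift free; split; last by split=> //; apply: lift_centrally_weakly_abelian idealI lift free.
  by move=> x Ix; have [e [he _ xe]] := lift x Ix; exists e.
Qed.
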